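(* Let $d\ge 3$, $\lambda>0$ with $\log d\lesssim\lambda\lesssim d$, $\rho_0=\log^{-c_0}d$ for a constant $c_0>0$, $\mu=\rho_0/(d+\lambda)$, and let $(a,b,c)$ solve \[ \dot a=a(24-16a-8r),\quad \dot b=8(1+\lambda)(1-r)b-16(1+\lambda)^2b^2,\quad \dot c=8(1-r)c-16c^2, \] with $r=a+(1+\lambda)b+(d-2)c$ and $a(0)=b(0)=c(0)=\mu$. Fix $\rho\in(0,1/12)$, $\varepsilon\in(0,1/4]$ and define $T_{1a}=\inf\{t\ge0:r(t)\ge\rho\}$, $T_1=\inf\{t\ge T_{1a}:\dot b(t)\le0\}$, $T_{2a}=\inf\{t\ge T_1:r(t)\ge1-\varepsilon\}$, $T_2=\inf\{t\ge T_{2a}:a(t)\ge\rho\}$. Then, for $d$ large enough: (1) $T_2-T_{2a}=\Theta\big(\log(1/a(T_{2a}))\big)=\Theta(\log d)$; (2) $\mathrm{Align}(T_2)=1-O(\lambda^{-2})-o(1)$.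
   Context: This ODE is the population gradient flow of the phase-retrieval model $y=(x^\top w_\star)^2+\nu$, $x\sim\mathcal N(0,I_d+\lambda vv^\top)$ ($v\perp w_\star$ unit vectors), with network $f_W(x)=\sum_{j=1}^d(w_j^\top x)^2$, in the coordinates $WW^\top=a\,w_\star w_\star^\top+b\,vv^\top+c(I-w_\star w_\star^\top-vv^\top)$, started from $WW^\top=\mu I_d$. The alignment is $\mathrm{Align}(t)=a(t)/\sqrt{a(t)^2+b(t)^2+(d-2)c(t)^2}$. Asymptotic notation refers to $d\to\infty$ with $\varepsilon,\rho$ fixed. *)

From Stdlib Require Import Reals.
From Coquelicot Require Import Coquelicot.
Open Scope R_scope.

Definition rfun (d : nat) (lam : R) (a b c : R -> R) (t : R) : R :=
  a t + (1 + lam) * b t + (INR d - 2) * c t.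

Definition is_solution (d : nat) (lam mu : R) (a b c : R -> R) : Prop :=
  a 0 = mu /\ b 0 = mu /\ c 0 = mu /\
  forall t, 0 <= t ->
    is_derive a t (a t * (24 - 16 * a t - 8 * rfun d lam a b c t)) /\
    is_derive b t (8 * (1 + lam) * (1 - rfun d lam a b c t) * b t
                   - 16 * (1 + lam) ^ 2 * b t ^ 2) /\
    is_derive c t (8 * (1 - rfun d lam a b c t) * c t - 16 * c t ^ 2).

(* T = inf { t >= t0 : P t }, the infimum being attained (first hitting time). *)
Definition first_hit (P : R -> Prop) (t0 T : R) : Prop :=
  t0 <= T /\ P T /\ forall t, t0 <= t < T -> ~ P t.

Definition Align (d : nat) (a b c : R -> R) (t : R) : R :=
  a t / sqrt (a t ^ 2 + b t ^ 2 + (INR d - 2) * c t ^ 2).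

From Stdlib Require Import Reals Lra Psatz Classical.
From Coquelicot Require Import Coquelicot.
Open Scope R_scope.

(* The solution stays positive and r < 3/2 forever, because r' < 0 as soon as r >= 3/2; so every
   term of r is below 3/2, and c <= 3 / (2 (d - 2)) is negligible against rho and eps.  Until r reaches rho, b grows like exp (6 (1 + lam) t),
   which exceeds d^2 by time 1 / (3 k1) since lam >= k1 log d.  While b increases, c grows at rate
   4 rho, and while r < 1 - eps at rate 4 eps; starting from mu = rho0 / (d + lam), both phases end
   within O(log (1 / rho0)) = o(log d).  Meanwhile a <= mu exp (24 t) stays below d^(-1/2), and
   from then on a grows at a rate between 10 and 24, so it needs a time
   Theta(log (1 / a(T2a))) = Theta(log d) to reach rho.  At T2 we have a >= rho while lam b and
   (d - 2) c are bounded, which gives the alignment estimate. *)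

Lemma exp_le_compat x y : x <= y -> exp x <= exp y.
Proof.
  intros [Hlt | ->]; [left; apply exp_increasing, Hlt | lra].
Qed.

Lemma ex_derive_continuity_pt f x : ex_derive f x -> continuity_pt f x.
Proof.
  intros [l H]. apply is_derive_Reals in H.
  apply derivable_continuous_pt. exact (exist _ l H).
Qed.

Lemma le_of_derive_nonneg (f f' : R -> R) s t : s <= t ->
  (forall x, s <= x <= t -> is_derive f x (f' x)) ->
  (forall x, s < x < t -> 0 <= f' x) -> f s <= f t.
Proof.
  intros [Hst | ->] Hder Hpos; [|lra].
  destruct (MVT_cor2 f f' s t Hst) as [x [Hx Hsx]].
  - intros x Hsx. apply is_derive_Reals, Hder, Hsx.
  - specialize (Hpos x Hsx). nra.
Qed.

Lemma gronwall_lower (x x' : R -> R) k s t : s <= t ->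
  (forall u, s <= u <= t -> is_derive x u (x' u)) ->
  (forall u, s < u < t -> k * x u <= x' u) ->
  x s * exp (k * (t - s)) <= x t.
Proof.
  intros Hst Hder Hk.
  assert (Hmono : x s * exp (- k * s) <= x t * exp (- k * t)).
  { apply (le_of_derive_nonneg (fun u => x u * exp (- k * u))
                                (fun u => (x' u - k * x u) * exp (- k * u)) s t Hst).
    - intros u Hu. auto_derive.
      + exists (x' u). apply Hder, Hu.
      + rewrite (is_derive_unique _ u (x' u)) by (apply Hder, Hu). ring.
    - intros u Hu. apply Rmult_le_pos; [specialize (Hk u Hu); lra | left; apply exp_pos]. }
  apply (Rmult_le_compat_r (exp (k * t))) in Hmono; [|left; apply exp_pos].
  rewrite !Rmult_assoc, <- !exp_plus in Hmono.
  replace (- k * t + k * t) with 0 in Hmono by ring.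
  replace (- k * s + k * t) with (k * (t - s)) in Hmono by ring.
  rewrite exp_0 in Hmono. lra.
Qed.

Lemma gronwall_upper (x x' : R -> R) k s t : s <= t ->
  (forall u, s <= u <= t -> is_derive x u (x' u)) ->
  (forall u, s < u < t -> x' u <= k * x u) ->
  x t <= x s * exp (k * (t - s)).
Proof.
  intros Hst Hder Hk.
  enough (- x s * exp (k * (t - s)) <= - x t) by lra.
  apply (gronwall_lower (fun u => - x u) (fun u => - x' u) k s t Hst).
  - intros u Hu. apply (is_derive_opp x), Hder, Hu.
  - intros u Hu. specialize (Hk u Hu). lra.
Qed.

Lemma derive_neg_gt_left f T l : is_derive f T l -> l < 0 ->
  exists del, 0 < del /\ forall s, T - del < s < T -> f T < f s.
Proof.
  intros Hder Hl. apply is_derive_Reals in Hder.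
  destruct (Hder (- l / 2)) as [del Hdel]; [lra|].
  exists del. split; [apply cond_pos|]. intros s Hs.
  assert (Hh : s - T <> 0) by lra.
  assert (Hsmall : Rabs (s - T) < del) by (rewrite Rabs_left; lra).
  specialize (Hdel (s - T) Hh Hsmall). replace (T + (s - T)) with s in Hdel by ring.
  apply Rabs_def2 in Hdel.
  assert (Hq : (f s - f T) / (s - T) < l / 2) by lra.
  apply (Rmult_lt_compat_r (T - s)) in Hq; [|lra].
  replace ((f s - f T) / (s - T) * (T - s)) with (f T - f s) in Hq by (field; lra).
  nra.
Qed.

Lemma first_hit_ext (P Q : R -> Prop) t0 T :
  (forall t, t0 <= t -> P t <-> Q t) -> first_hit P t0 T -> first_hit Q t0 T.
Proof.
  intros HPQ (HT & HPT & Hbefore). split; [exact HT | split].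
  - apply HPQ; assumption.
  - intros t Ht HQt. apply (Hbefore t Ht), HPQ; [lra | exact HQt].
Qed.

Lemma first_hit_ge_exists (f : R -> R) th t0 t1 : t0 <= t1 ->
  (forall t, t0 <= t -> continuity_pt f t) -> th <= f t1 ->
  exists T, first_hit (fun t => th <= f t) t0 T /\ T <= t1.
Proof.
  intros H01 Hcont Ht1.
  set (E := fun t => t0 <= t /\ forall s, t0 <= s < t -> f s < th).
  assert (HE_le : forall t s, E t -> t0 <= s -> th <= f s -> t <= s).
  { intros t s [_ Hs] Hs0 Hfs. destruct (Rle_lt_dec t s) as [|Hst]; [assumption|].
    specialize (Hs s (conj Hs0 Hst)). lra. }
  destruct (completeness E) as [T [Hub Hlub]].
  - exists t1. intros t Et. apply (HE_le t t1 Et H01 Ht1).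
  - exists t0. split; [lra | intros; lra].
  assert (Ht0T : t0 <= T) by (apply Hub; split; [lra | intros; lra]).
  assert (Hbefore : forall s, t0 <= s < T -> f s < th).
  { intros s Hs. destruct (Rlt_le_dec (f s) th) as [|Hfs]; [assumption|].
    enough (T <= s) by lra.
    apply Hlub. intros t Et. apply (HE_le t s Et); lra. }
  exists T. split; [split; [exact Ht0T | split] |].
  - destruct (Rle_lt_dec th (f T)) as [|HfT]; [assumption|]. exfalso.
    destruct (Hcont T Ht0T (th - f T)) as [del [Hdel Hnear]]; [lra|].
    assert (Hpast : E (T + del / 2)).
    { split; [lra|]. intros s Hs. destruct (Rlt_le_dec s T); [apply Hbefore; lra|].
      destruct (Req_dec s T) as [-> | HsT]; [exact HfT|].
      assert (Hclose : R_dist (f s) (f T) < th - f T).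
      { apply Hnear. split; [split; [exact I | auto] |].
        simpl; unfold R_dist. rewrite Rabs_right; lra. }
      unfold R_dist in Hclose. apply Rabs_def2 in Hclose. lra. }
    specialize (Hub _ Hpast). lra.
  - intros t Ht Hft. specialize (Hbefore t Ht). lra.
  - apply Hlub. intros t Et. apply (HE_le t t1 Et H01 Ht1).
Qed.

Lemma first_hit_ge_within (f : R -> R) th t0 t1 : t0 <= t1 ->
  (forall t, t0 <= t -> continuity_pt f t) ->
  ~ (forall t, t0 <= t <= t1 -> f t < th) ->
  exists T, first_hit (fun t => th <= f t) t0 T /\ T <= t1.
Proof.
  intros H01 Hcont Hnot.
  apply not_all_ex_not in Hnot as [t Ht].
  apply imply_to_and in Ht as [Ht Hft].
  destruct (first_hit_ge_exists f th t0 t) as [T [HT HTt]]; [lra | exact Hcont | lra |].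
  exists T. split; [exact HT | lra].
Qed.

Lemma derive_neg_upper_barrier (f f' : R -> R) th :
  (forall t, 0 <= t -> is_derive f t (f' t)) -> f 0 < th ->
  (forall t, 0 <= t -> th <= f t -> f' t < 0) ->
  forall t, 0 <= t -> f t < th.
Proof.
  intros Hder H0 Hneg t Ht.
  destruct (Rlt_le_dec (f t) th) as [|Hft]; [assumption|]. exfalso.
  destruct (first_hit_ge_exists f th 0 t Ht) as [T [(HT0 & HfT & Hbefore) _]];
    [intros u Hu; apply ex_derive_continuity_pt; exists (f' u); apply Hder, Hu | exact Hft |].
  assert (HTpos : 0 < T) by (destruct HT0 as [|<-]; [assumption | lra]).
  destruct (derive_neg_gt_left f T (f' T) (Hder T HT0) (Hneg T HT0 HfT)) as [del [Hdel Hgt]].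
  set (s := T - Rmin del T / 2).
  assert (0 < Rmin del T) by (apply Rmin_pos; lra).
  assert (Rmin del T <= del) by apply Rmin_l.
  assert (Rmin del T <= T) by apply Rmin_r.
  apply (Hbefore s); [unfold s; lra|].
  specialize (Hgt s ltac:(unfold s; lra)). lra.
Qed.

Lemma pos_of_derive_mul (x G : R -> R) :
  (forall t, 0 <= t -> is_derive x t (x t * G t)) ->
  (forall t, 0 <= t -> continuity_pt G t) -> 0 < x 0 ->
  forall t, 0 <= t -> 0 < x t.
Proof.
  intros Hder HG H0 t Ht.
  destruct (Rlt_le_dec 0 (x t)) as [|Hxt]; [assumption|]. exfalso.
  destruct (first_hit_ge_exists (fun u => - x u) 0 0 t Ht) as [T [(HT0 & HxT & Hbefore) _]].
  - intros u Hu. apply continuity_pt_opp, ex_derive_continuity_pt.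
    exists (x u * G u). apply Hder, Hu.
  - lra.
  - simpl in *.
    assert (Hpos : forall u, 0 <= u < T -> 0 < x u).
    { intros u Hu. specialize (Hbefore u Hu). lra. }
    destruct (continuity_ab_min G 0 T HT0) as [m [Hmin _]]; [intros; apply HG; lra|].
    assert (Hgrow : x 0 * exp (G m * (T - 0)) <= x T).
    { apply (gronwall_lower x (fun u => x u * G u)); [exact HT0 | intros; apply Hder; lra |].
      intros u Hu. specialize (Hmin u ltac:(lra)). specialize (Hpos u ltac:(lra)). nra. }
    assert (0 < x 0 * exp (G m * (T - 0))) by (apply Rmult_lt_0_compat; [exact H0 | apply exp_pos]).
    lra.
Qed.

Lemma div_sqrt_sqr_plus_close rho A X : 0 < rho <= A -> 0 <= X ->
  Rabs (A / sqrt (A ^ 2 + X) - 1) <= X / (2 * rho ^ 2).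
Proof.
  intros [Hrho HA] HX.
  set (s := sqrt (A ^ 2 + X)).
  assert (Hs2 : s * s = A ^ 2 + X) by (apply sqrt_sqrt; nra).
  assert (Hs0 : 0 <= s) by apply sqrt_pos.
  assert (HAs : A <= s) by nra.
  assert (Hgap : 1 - A / s = X / (s * (s + A))).
  { replace X with ((s - A) * (s + A)) by nra. field. lra. }
  assert (Hden : 2 * rho ^ 2 <= s * (s + A)) by nra.
  rewrite Rabs_minus_sym, Rabs_right by (rewrite Hgap; apply Rle_ge, Rdiv_le_0_compat; nra).
  rewrite Hgap. unfold Rdiv. apply Rmult_le_compat_l; [exact HX|].
  apply Rinv_le_contravar; nra.
Qed.

Lemma ln_ratio_bounds rho al : 0 < rho < 1 -> 0 < al <= rho ^ 2 ->
  ln (1 / al) / 2 <= ln (rho / al) <= ln (1 / al).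
Proof.
  intros [Hrho Hrho1] [Hal Halrho].
  rewrite !ln_div by lra. rewrite ln_1.
  assert (Hlnrho : ln rho < 0) by (rewrite <- ln_1; apply ln_increasing; lra).
  assert (Hln2 : ln al <= 2 * ln rho).
  { replace (2 * ln rho) with (ln (rho ^ 2)) by (simpl; rewrite Rmult_1_r, ln_mult; lra).
    apply ln_le; assumption. }
  lra.
Qed.

Section Solution.

Variables (d : nat) (lam mu : R) (a b c : R -> R).
Hypothesis Hsol : is_solution d lam mu a b c.
Hypothesis Hd : (3 <= d)%nat.
Hypothesis Hlam : 0 < lam.
Hypothesis Hmu : 0 < mu.
Hypothesis Hr0 : mu * (INR d + lam) <= 1.

Local Notation D := (INR d).
Local Notation r := (rfun d lam a b c).
Local Notation da t := (a t * (24 - 16 * a t - 8 * r t)).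
Local Notation db t := (8 * ((1 + lam) * b t) * (1 - r t - 2 * ((1 + lam) * b t))).
Local Notation dc t := (8 * c t * (1 - r t - 2 * c t)).

Lemma INR_ge_3 : 3 <= D.
Proof. apply le_INR in Hd. simpl in Hd. lra. Qed.

Lemma solution_derive_a t : 0 <= t -> is_derive a t (da t).
Proof. intros Ht. apply Hsol, Ht. Qed.

Lemma solution_derive_b t : 0 <= t -> is_derive b t (db t).
Proof.
  intros Ht.
  replace (db t) with (8 * (1 + lam) * (1 - r t) * b t - 16 * (1 + lam) ^ 2 * b t ^ 2) by ring.
  apply Hsol, Ht.
Qed.

Lemma solution_derive_c t : 0 <= t -> is_derive c t (dc t).
Proof.
  intros Ht. replace (dc t) with (8 * (1 - r t) * c t - 16 * c t ^ 2) by ring.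
  apply Hsol, Ht.
Qed.

Lemma solution_derive_r t : 0 <= t ->
  is_derive r t (da t + (1 + lam) * db t + (D - 2) * dc t).
Proof.
  intros Ht. unfold rfun at 1.
  apply @is_derive_plus; [apply @is_derive_plus|].
  - apply solution_derive_a, Ht.
  - apply is_derive_scal, solution_derive_b, Ht.
  - apply is_derive_scal, solution_derive_c, Ht.
Qed.

Lemma solution_ex_derive t : 0 <= t -> ex_derive a t /\ ex_derive b t /\ ex_derive c t.
Proof.
  intros Ht. repeat split; eexists.
  - apply solution_derive_a, Ht.
  - apply solution_derive_b, Ht.
  - apply solution_derive_c, Ht.
Qed.

Ltac solution_continuity :=
  let u := fresh "u" in let Hu := fresh "Hu" in
  intros u Hu; destruct (solution_ex_derive u Hu) as (? & ? & ?);
  apply ex_derive_continuity_pt; unfold rfun; auto_derive; tauto.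

Lemma continuity_pt_rfun : forall t, 0 <= t -> continuity_pt r t.
Proof. solution_continuity. Qed.

Lemma continuity_pt_a : forall t, 0 <= t -> continuity_pt a t.
Proof. solution_continuity. Qed.

Lemma solution_pos t : 0 <= t -> 0 < a t /\ 0 < b t /\ 0 < c t.
Proof.
  intros Ht. destruct Hsol as (Ha0 & Hb0 & Hc0 & _). split; [|split].
  - apply (pos_of_derive_mul a (fun u => 24 - 16 * a u - 8 * r u));
      [| solution_continuity | lra | exact Ht].
    intros u Hu. apply solution_derive_a, Hu.
  - apply (pos_of_derive_mul b (fun u => 8 * (1 + lam) * (1 - r u - 2 * ((1 + lam) * b u))));
      [| solution_continuity | lra | exact Ht].
    intros u Hu. replace (b u * _) with (db u) by ring. apply solution_derive_b, Hu.
  - apply (pos_of_derive_mul c (fun u => 8 * (1 - r u - 2 * c u)));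
      [| solution_continuity | lra | exact Ht].
    intros u Hu. replace (c u * _) with (dc u) by ring. apply solution_derive_c, Hu.
Qed.

Lemma rfun_ge_parts t : 0 <= t ->
  0 < a t <= r t /\ 0 < (1 + lam) * b t <= r t /\ 0 < (D - 2) * c t <= r t.
Proof.
  intros Ht. destruct (solution_pos t Ht) as (Pa & Pb & Pc). pose proof INR_ge_3.
  assert (0 < (1 + lam) * b t) by (apply Rmult_lt_0_compat; lra).
  assert (0 < (D - 2) * c t) by (apply Rmult_lt_0_compat; lra).
  unfold rfun. lra.
Qed.

(* Above 3/2 every term of r' is negative: the b- and c-terms are at most -4 times their share of r,
   and a (24 - 16 a - 8 r) - 4 (r - a) <= 16 a - 16 a^2 - 6 < 0. *)
Lemma rfun_derive_neg t : 0 <= t -> 3 / 2 <= r t ->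
  da t + (1 + lam) * db t + (D - 2) * dc t < 0.
Proof.
  intros Ht Hr. pose proof INR_ge_3.
  destruct (rfun_ge_parts t Ht) as ([Pa _] & [PB _] & [PC _]).
  destruct (solution_pos t Ht) as (_ & Pb & Pc).
  assert (Hr_eq : r t = a t + (1 + lam) * b t + (D - 2) * c t) by reflexivity.
  set (B := (1 + lam) * b t) in *. set (C := (D - 2) * c t) in *.
  assert (HtermB : (1 + lam) * (8 * B * (1 - r t - 2 * B)) <= - 4 * B).
  { assert (0 <= lam * B) by nra. nra. }
  assert (HtermC : (D - 2) * (8 * c t * (1 - r t - 2 * c t)) <= - 4 * C).
  { unfold C. assert (0 <= (D - 2) * c t * c t) by (apply Rmult_le_pos; nra). nra. }
  assert (Hterma : a t * (24 - 16 * a t - 8 * r t) <= a t * (12 - 16 * a t)) by nra.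
  nra.
Qed.

Lemma rfun_lt_3_2 t : 0 <= t -> r t < 3 / 2.
Proof.
  eapply (derive_neg_upper_barrier r).
  - intros u Hu. apply solution_derive_r, Hu.
  - destruct Hsol as (Ha0 & Hb0 & Hc0 & _).
    unfold rfun. rewrite Ha0, Hb0, Hc0. lra.
  - apply rfun_derive_neg.
Qed.

Lemma solution_a_le_exp t : 0 <= t -> a t <= mu * exp (24 * t).
Proof.
  intros Ht. destruct Hsol as (Ha0 & _).
  rewrite <- Ha0. replace (24 * t) with (24 * (t - 0)) by ring.
  eapply (gronwall_upper a _ 24 0 t Ht); [intros; apply solution_derive_a; lra|].
  intros u Hu. destruct (rfun_ge_parts u ltac:(lra)) as ([Pa Par] & _). nra.
Qed.

Lemma solution_c_le_exp t : 0 <= t -> c t <= mu * exp (8 * t).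
Proof.
  intros Ht. destruct Hsol as (_ & _ & Hc0 & _).
  rewrite <- Hc0. replace (8 * t) with (8 * (t - 0)) by ring.
  eapply (gronwall_upper c _ 8 0 t Ht); [intros; apply solution_derive_c; lra|].
  intros u Hu. destruct (rfun_ge_parts u ltac:(lra)) as ([Pa Par] & _ & [PC _]).
  destruct (solution_pos u ltac:(lra)) as (_ & _ & Pc). nra.
Qed.

(* While a < rho < 1/12 its rate 24 - 16 a - 8 r lies in [10, 24]. *)
Lemma a_first_hit_time rho T0 : 0 < rho < 1 / 12 -> 0 <= T0 -> a T0 <= rho ->
  exists T, first_hit (fun t => rho <= a t) T0 T /\
            ln (rho / a T0) / 24 <= T - T0 <= ln (rho / a T0) / 10.
Proof.
  intros Hrho HT0 HaT0.
  destruct (solution_pos T0 HT0) as (Pa0 & _).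
  assert (Hratio : 1 <= rho / a T0) by (apply Rle_div_r; lra).
  assert (Hln : 0 <= ln (rho / a T0)) by (rewrite <- ln_1; apply ln_le; lra).
  set (tau := ln (rho / a T0) / 10).
  destruct (first_hit_ge_within a rho T0 (T0 + tau)) as [T [HT HTtau]].
  - unfold tau; lra.
  - intros t Ht. apply continuity_pt_a. lra.
  - intros Hbelow.
    assert (Hgrow : a T0 * exp (10 * (T0 + tau - T0)) <= a (T0 + tau)).
    { eapply (gronwall_lower a _ 10); [unfold tau; lra | intros; apply solution_derive_a; lra |].
      intros u Hu. specialize (Hbelow u ltac:(lra)). specialize (rfun_lt_3_2 u ltac:(lra)).
      destruct (solution_pos u ltac:(lra)) as (Pa & _). nra. }
    replace (10 * (T0 + tau - T0)) with (ln (rho / a T0)) in Hgrow by (unfold tau; field).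
    rewrite exp_ln in Hgrow by lra.
    replace (a T0 * (rho / a T0)) with rho in Hgrow by (field; lra).
    specialize (Hbelow (T0 + tau) ltac:(unfold tau; lra)). lra.
  - exists T. split; [exact HT|]. destruct HT as (HT0T & HaT & _).
    split; [| lra].
    assert (Hgrow : a T <= a T0 * exp (24 * (T - T0))).
    { eapply (gronwall_upper a _ 24 T0 T HT0T); [intros; apply solution_derive_a; lra|].
      intros u Hu. destruct (rfun_ge_parts u ltac:(lra)) as ([Pa Par] & _). nra. }
    assert (Hexp : rho / a T0 <= exp (24 * (T - T0))) by (apply Rle_div_l; lra).
    apply ln_le in Hexp; [| apply Rdiv_lt_0_compat; lra].
    rewrite ln_exp in Hexp. lra.
Qed.

Lemma solution_align_close rho t : 0 <= t -> 0 < rho <= a t ->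
  Rabs (Align d a b c t - 1) <= 9 / (8 * rho ^ 2) / lam ^ 2 + 9 / (8 * rho ^ 2) / (D - 2).
Proof.
  intros Ht Ha. pose proof INR_ge_3. pose proof (rfun_lt_3_2 t Ht).
  destruct (rfun_ge_parts t Ht) as (_ & [PB HB] & [PC HC]).
  destruct (solution_pos t Ht) as (_ & Pb & Pc).
  unfold Align. rewrite (Rplus_assoc (a t ^ 2)).
  eapply Rle_trans; [apply div_sqrt_sqr_plus_close; [exact Ha | nra] |].
  assert (Hb : b t ^ 2 <= 9 / 4 / lam ^ 2).
  { apply (Rle_div_r _ _ (lam ^ 2)); [nra|].
    assert (Hlb : 0 <= lam * b t <= 3 / 2).
    { split; [apply Rmult_le_pos; lra|].
      replace (lam * b t) with ((1 + lam) * b t - b t) by ring. lra. }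
    replace (b t ^ 2 * lam ^ 2) with ((lam * b t) ^ 2) by ring. nra. }
  assert (Hc : (D - 2) * c t ^ 2 <= 9 / 4 / (D - 2)).
  { apply (Rle_div_r _ _ (D - 2)); [lra|].
    replace ((D - 2) * c t ^ 2 * (D - 2)) with (((D - 2) * c t) ^ 2) by ring. nra. }
  assert (Hrho2 : 0 < rho ^ 2) by nra.
  replace (9 / (8 * rho ^ 2) / lam ^ 2 + 9 / (8 * rho ^ 2) / (D - 2))
    with ((9 / 4 / lam ^ 2 + 9 / 4 / (D - 2)) / (2 * rho ^ 2)) by (field; nra).
  apply Rmult_le_compat_r; [left; apply Rinv_0_lt_compat; lra | lra].
Qed.

Section Phases.

Local Notation rho0 := (mu * (D + lam)).

Variables (k1 k2 rho eps : R).
Hypothesis Hk1 : 0 < k1.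
Hypothesis Hrho : 0 < rho < 1 / 12.
Hypothesis Heps : 0 < eps <= 1 / 4.
Hypothesis Hlam_lo : k1 * ln D <= lam.
Hypothesis Hlam_hi : lam <= k2 * D.
Hypothesis Hmass : 1 + k2 <= rho0 * D.
Hypothesis Hstart : rho0 * exp (8 / (3 * k1)) <= rho / 4.

Local Notation L := (ln (3 * (1 + k2) / rho0)).
Local Notation tau0 := (1 / (3 * k1)).
Local Notation tau1 := (L / (4 * rho)).
Local Notation tau2 := ((1 + L) / (4 * eps)).

Hypothesis Hhorizon : 48 * (tau0 + tau1 + tau2) <= ln D.
Hypothesis Hsmall : exp (- (ln D / 2)) <= rho ^ 2.
Hypothesis Hdim_rho : 6 <= rho * (D - 2).
Hypothesis Hdim_eps : 6 <= eps * (D - 2).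

Lemma L_pos : 0 < L.
Proof.
  pose proof INR_ge_3.
  assert (Hk2 : 0 < k2) by nra.
  assert (Hrho0 : 0 < rho0) by (apply Rmult_lt_0_compat; lra).
  rewrite <- ln_1. apply ln_increasing; [lra|].
  apply Rlt_div_r; lra.
Qed.

Lemma tau_nonneg : 0 <= tau0 /\ 0 <= tau1 /\ 0 <= tau2.
Proof.
  pose proof L_pos.
  repeat split; apply Rdiv_le_0_compat; lra.
Qed.

Lemma mu_D_le_1 : mu * D <= 1.
Proof. nra. Qed.

Lemma mu_D2_ge_1 : 1 <= mu * D ^ 2.
Proof. pose proof INR_ge_3. nra. Qed.

Lemma mu_exp_L_ge : 1 <= (D - 2) * mu * exp L.
Proof.
  pose proof INR_ge_3. pose proof L_pos.
  assert (Hk2 : 0 < k2) by nra.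
  rewrite exp_ln by (apply Rdiv_lt_0_compat; nra).
  apply (Rmult_le_reg_r rho0); [nra|].
  replace ((D - 2) * mu * (3 * (1 + k2) / rho0) * rho0) with (mu * (3 * (1 + k2) * (D - 2)))
    by (field; nra).
  rewrite Rmult_1_l. apply Rmult_le_compat_l; [lra | nra].
Qed.

Lemma c_small t : 0 <= t -> c t <= rho / 4 /\ c t <= eps / 4.
Proof.
  intros Ht. pose proof INR_ge_3. pose proof (rfun_lt_3_2 t Ht).
  destruct (rfun_ge_parts t Ht) as (_ & _ & [_ HC]).
  split; nra.
Qed.

Lemma a_small t : 0 <= t <= tau0 + tau1 + tau2 -> a t <= exp (- (ln D / 2)).
Proof.
  intros Ht. pose proof INR_ge_3.
  eapply Rle_trans; [apply solution_a_le_exp; lra|].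
  replace (- (ln D / 2)) with (- ln D + ln D / 2) by lra.
  rewrite exp_plus, exp_Ropp, exp_ln by lra.
  apply Rmult_le_compat; [lra | left; apply exp_pos | | apply exp_le_compat; lra].
  apply (Rmult_le_reg_r D); [lra|]. rewrite Rinv_l by lra. apply mu_D_le_1.
Qed.

Lemma exists_T1a : exists T, first_hit (fun t => rho <= r t) 0 T /\ T <= tau0.
Proof.
  pose proof INR_ge_3. destruct tau_nonneg as (Htau0 & _).
  apply first_hit_ge_within; [exact Htau0 | apply continuity_pt_rfun |].
  intros Hbelow.
  assert (Hgrow : b 0 * exp (6 * (1 + lam) * (tau0 - 0)) <= b tau0).
  { eapply gronwall_lower; [lra | intros; apply solution_derive_b; lra |].
    intros u Hu. specialize (Hbelow u ltac:(lra)).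
    destruct (rfun_ge_parts u ltac:(lra)) as (_ & [PB HB] & _).
    destruct (solution_pos u ltac:(lra)) as (_ & Pb & _). nra. }
  destruct Hsol as (_ & Hb0 & _). rewrite Hb0 in Hgrow.
  assert (Hexp : D ^ 2 <= exp (6 * (1 + lam) * (tau0 - 0))).
  { replace (D ^ 2) with (exp (ln D) * exp (ln D)) by (rewrite exp_ln; [ring | lra]).
    rewrite <- exp_plus. apply exp_le_compat.
    replace (6 * (1 + lam) * (tau0 - 0)) with (2 * ((1 + lam) / k1)) by (field; lra).
    enough (ln D <= (1 + lam) / k1) by lra.
    apply Rle_div_r; lra. }
  pose proof mu_D2_ge_1.
  specialize (Hbelow tau0 ltac:(lra)).
  destruct (rfun_ge_parts tau0 Htau0) as (_ & [_ HB] & _).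
  destruct (solution_pos tau0 Htau0) as (_ & Pb & _).
  nra.
Qed.

Lemma state_at_T1a T : first_hit (fun t => rho <= r t) 0 T -> T <= tau0 ->
  rho / 2 <= (1 + lam) * b T /\ mu <= c T.
Proof.
  intros (HT0 & HrT & Hbefore) HTtau. pose proof INR_ge_3.
  destruct tau_nonneg as (_ & Htau1 & Htau2).
  split.
  - assert (HaT : a T <= rho / 4).
    { assert (a T <= rho ^ 2) by (eapply Rle_trans; [apply a_small; lra | exact Hsmall]). nra. }
    assert (HCT : (D - 2) * c T <= rho / 4).
    { eapply Rle_trans; [apply Rmult_le_compat_l; [lra | apply solution_c_le_exp, HT0] |].
      eapply Rle_trans; [| exact Hstart].
      replace (8 / (3 * k1)) with (8 * tau0) by (field; lra).
      rewrite <- Rmult_assoc. apply Rmult_le_compat; [nra | left; apply exp_pos | nra |].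
      apply exp_le_compat. lra. }
    unfold rfun in HrT. lra.
  - destruct Hsol as (_ & _ & Hc0 & _). rewrite <- Hc0.
    eapply le_of_derive_nonneg; [exact HT0 | intros; apply solution_derive_c; lra |].
    intros u Hu. assert (r u < rho) by (apply Rnot_le_lt, Hbefore; lra).
    destruct (c_small u ltac:(lra)).
    destruct (solution_pos u ltac:(lra)) as (_ & _ & Pc). nra.
Qed.

(* While b increases, (1 + lam) b stays >= rho / 2, so 1 - r - 2 c >= rho - rho / 2. *)
Lemma c_growth_while_b_increasing T t2 : 0 <= T <= t2 -> rho / 2 <= (1 + lam) * b T ->
  (forall u, T <= u < t2 -> 2 * ((1 + lam) * b u) < 1 - r u) ->
  c T * exp (4 * rho * (t2 - T)) <= c t2.
Proof.
  intros HT HBT Hinc.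
  assert (HB : forall u, T <= u <= t2 -> rho / 2 <= (1 + lam) * b u).
  { intros u Hu.
    assert (b T <= b u).
    { eapply le_of_derive_nonneg; [lra | intros; apply solution_derive_b; lra |].
      intros v Hv. specialize (Hinc v ltac:(lra)).
      destruct (rfun_ge_parts v ltac:(lra)) as (_ & [PB _] & _). nra. }
    nra. }
  eapply gronwall_lower; [lra | intros; apply solution_derive_c; lra |].
  intros u Hu. specialize (Hinc u ltac:(lra)). specialize (HB u ltac:(lra)).
  destruct (c_small u ltac:(lra)).
  destruct (solution_pos u ltac:(lra)) as (_ & _ & Pc). nra.
Qed.

Lemma continuity_pt_derive_b : forall t, 0 <= t -> continuity_pt (fun u => db u) t.
Proof. solution_continuity. Qed.

Lemma derive_b_pos_lt t : 0 <= t -> 0 < db t -> 2 * ((1 + lam) * b t) < 1 - r t.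
Proof.
  intros Ht Hdb. destruct (rfun_ge_parts t Ht) as (_ & [PB _] & _). nra.
Qed.

(* If b kept increasing up to T1a + tau1, c would grow at rate 4 rho and reach
   (D - 2) c >= (D - 2) mu exp L >= 1, so r >= 1, which forbids b' > 0. *)
Lemma exists_T1 T1a : 0 <= T1a -> rho / 2 <= (1 + lam) * b T1a -> mu <= c T1a ->
  exists T, first_hit (fun t => Derive b t <= 0) T1a T /\ T <= T1a + tau1 /\ mu <= c T.
Proof.
  intros HT1a HBT1a HcT1a. pose proof INR_ge_3. destruct tau_nonneg as (_ & Htau1 & _).
  destruct (first_hit_ge_within (fun t => - db t) 0 T1a (T1a + tau1)) as [T [HT HTle]].
  - lra.
  - intros t Ht. apply continuity_pt_opp, continuity_pt_derive_b. lra.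
  - intros Hbelow.
    assert (Hinc : forall u, T1a <= u <= T1a + tau1 -> 2 * ((1 + lam) * b u) < 1 - r u).
    { intros u Hu. apply derive_b_pos_lt; [lra|]. specialize (Hbelow u Hu). lra. }
    assert (Hgrow : c T1a * exp (4 * rho * (T1a + tau1 - T1a)) <= c (T1a + tau1)).
    { apply c_growth_while_b_increasing; [lra | exact HBT1a |]. intros; apply Hinc; lra. }
    replace (4 * rho * (T1a + tau1 - T1a)) with L in Hgrow by (field; lra).
    assert (HC : 1 <= (D - 2) * c (T1a + tau1)).
    { eapply Rle_trans; [apply mu_exp_L_ge|]. rewrite Rmult_assoc.
      apply Rmult_le_compat_l; [lra|]. eapply Rle_trans; [| exact Hgrow].
      apply Rmult_le_compat_r; [left; apply exp_pos | exact HcT1a]. }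
    specialize (Hinc (T1a + tau1) ltac:(lra)).
    destruct (rfun_ge_parts (T1a + tau1) ltac:(lra)) as (_ & [PB _] & [_ HCr]). lra.
  - exists T. destruct HT as (HT1aT & HdbT & Hbefore). split; [| split; [exact HTle|]].
    + apply (first_hit_ext (fun t => 0 <= - db t)); [| repeat split; assumption].
      intros t Ht. rewrite (is_derive_unique b t (db t)) by (apply solution_derive_b; lra).
      split; intros; lra.
    + assert (Hgrow : c T1a * exp (4 * rho * (T - T1a)) <= c T).
      { apply c_growth_while_b_increasing; [lra | exact HBT1a |].
        intros u Hu. apply derive_b_pos_lt; [lra|].
        apply Rnot_le_lt. intros Hdb. apply (Hbefore u Hu). lra. }
      assert (1 <= exp (4 * rho * (T - T1a))) by (rewrite <- exp_0; apply exp_le_compat; nra).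
      nra.
Qed.

(* If r stayed below 1 - eps up to T1 + tau2, c would grow at rate 4 eps and reach
   (D - 2) c >= (D - 2) mu exp (1 + L) >= e > 3/2. *)
Lemma exists_T2a T1 : 0 <= T1 -> mu <= c T1 ->
  exists T, first_hit (fun t => 1 - eps <= r t) T1 T /\ T <= T1 + tau2.
Proof.
  intros HT1 HcT1. pose proof INR_ge_3. destruct tau_nonneg as (_ & _ & Htau2).
  apply first_hit_ge_within; [lra | intros t Ht; apply continuity_pt_rfun; lra |].
  intros Hbelow.
  assert (Hgrow : c T1 * exp (4 * eps * (T1 + tau2 - T1)) <= c (T1 + tau2)).
  { eapply gronwall_lower; [lra | intros; apply solution_derive_c; lra |].
    intros u Hu. specialize (Hbelow u ltac:(lra)). destruct (c_small u ltac:(lra)).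
    destruct (solution_pos u ltac:(lra)) as (_ & _ & Pc). nra. }
  replace (4 * eps * (T1 + tau2 - T1)) with (1 + L) in Hgrow by (field; lra).
  rewrite exp_plus in Hgrow.
  assert (He : 2 <= exp 1) by (pose proof (exp_ineq1_le 1); lra).
  assert (HC : 2 <= (D - 2) * c (T1 + tau2)).
  { assert (Hm : mu * (exp 1 * exp L) <= c (T1 + tau2)).
    { eapply Rle_trans; [| exact Hgrow].
      apply Rmult_le_compat_r; [left; apply Rmult_lt_0_compat; apply exp_pos | exact HcT1]. }
    assert (He_le : exp 1 <= (D - 2) * (mu * (exp 1 * exp L))).
    { replace ((D - 2) * (mu * (exp 1 * exp L))) with ((D - 2) * mu * exp L * exp 1) by ring.
      pose proof mu_exp_L_ge. pose proof (exp_pos 1). nra. }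
    assert ((D - 2) * (mu * (exp 1 * exp L)) <= (D - 2) * c (T1 + tau2))
      by (apply Rmult_le_compat_l; lra).
    lra. }
  pose proof (rfun_lt_3_2 (T1 + tau2) ltac:(lra)).
  destruct (rfun_ge_parts (T1 + tau2) ltac:(lra)) as (_ & _ & [_ HCr]). lra.
Qed.

Lemma a_at_T2a T : 0 <= T <= tau0 + tau1 + tau2 ->
  ln D / 2 <= ln (1 / a T) <= 2 * ln D /\ a T <= rho ^ 2.
Proof.
  intros HT. pose proof INR_ge_3.
  destruct (solution_pos T ltac:(lra)) as (PaT & _).
  assert (Hhi : a T <= exp (- (ln D / 2))) by (apply a_small, HT).
  assert (Hlo : mu <= a T).
  { destruct Hsol as (Ha0 & _). rewrite <- Ha0.
    eapply le_of_derive_nonneg; [lra | intros; apply solution_derive_a; lra |].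
    intros u Hu. pose proof (rfun_lt_3_2 u ltac:(lra)).
    assert (a u <= rho ^ 2) by (eapply Rle_trans; [apply a_small; lra | exact Hsmall]).
    assert (rho ^ 2 < 1 / 144) by nra.
    destruct (solution_pos u ltac:(lra)) as (Pa & _). apply Rmult_le_pos; lra. }
  rewrite ln_div, ln_1 by lra.
  split; [split | eapply Rle_trans; eassumption].
  - apply ln_le in Hhi; [| exact PaT]. rewrite ln_exp in Hhi. lra.
  - assert (Hmu2 : / D ^ 2 <= a T).
    { eapply Rle_trans; [| exact Hlo]. apply (Rmult_le_reg_r (D ^ 2)); [nra|].
      rewrite Rinv_l by nra. apply mu_D2_ge_1. }
    apply ln_le in Hmu2; [| apply Rinv_0_lt_compat; nra].
    rewrite ln_Rinv, ln_pow in Hmu2 by nra. simpl in Hmu2. lra.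
Qed.

Lemma solution_phases :
  exists T1a T1 T2a T2 : R,
    first_hit (fun t => rho <= r t) 0 T1a /\
    first_hit (fun t => Derive b t <= 0) T1a T1 /\
    first_hit (fun t => 1 - eps <= r t) T1 T2a /\
    first_hit (fun t => rho <= a t) T2a T2 /\
    1 / 48 * ln (1 / a T2a) <= T2 - T2a <= 1 / 10 * ln (1 / a T2a) /\
    1 / 96 * ln D <= T2 - T2a <= 1 / 5 * ln D /\
    Rabs (Align d a b c T2 - 1) <= 9 / (8 * rho ^ 2) / lam ^ 2 + 9 / (8 * rho ^ 2) / (D - 2).
Proof.
  destruct tau_nonneg as (Htau0 & Htau1 & Htau2).
  destruct exists_T1a as [T1a [HT1a HT1a_le]].
  destruct (state_at_T1a T1a HT1a HT1a_le) as [HB HcT1a].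
  pose proof HT1a as (HT1a0 & _).
  destruct (exists_T1 T1a HT1a0 HB HcT1a) as [T1 (HT1 & HT1_le & HcT1)].
  pose proof HT1 as (HT1_ge & _).
  destruct (exists_T2a T1 ltac:(lra) HcT1) as [T2a [HT2a HT2a_le]].
  pose proof HT2a as (HT2a_ge & _).
  destruct (a_at_T2a T2a ltac:(lra)) as [Hln Ha_rho2].
  destruct (solution_pos T2a ltac:(lra)) as (Pa & _).
  destruct (a_first_hit_time rho T2a Hrho ltac:(lra) ltac:(nra)) as [T2 [HT2 Htime]].
  destruct (ln_ratio_bounds rho (a T2a) ltac:(lra) (conj Pa Ha_rho2)).
  exists T1a, T1, T2a, T2. do 4 (split; [assumption|]).
  split; [lra | split; [lra|]].
  pose proof HT2 as (HT2_ge & HaT2 & _).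
  apply solution_align_close; lra.
Qed.

End Phases.

End Solution.

Lemma eventually_ge (M : R) : Rbar_locally p_infty (fun x => M <= x).
Proof. exists M. intros x Hx. lra. Qed.

Lemma eventually_ln_ge (M : R) : Rbar_locally p_infty (fun x => M <= ln x).
Proof. apply is_lim_ln_p, eventually_ge. Qed.

Lemma eventually_affine_ln_le (A B : R) : Rbar_locally p_infty (fun x => A * ln x + B <= x).
Proof.
  set (e := / (2 * (Rabs A + 1))).
  assert (He : 0 < e) by (apply Rinv_0_lt_compat; pose proof (Rabs_pos A); lra).
  destruct (proj2 (is_lim_spec _ _ _) is_lim_div_ln_p (mkposreal e He)) as [M HM].
  exists (Rmax M (Rmax 1 (2 * Rabs B))). intros x Hx.
  pose proof (Rmax_l M (Rmax 1 (2 * Rabs B))). pose proof (Rmax_r M (Rmax 1 (2 * Rabs B))).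
  pose proof (Rmax_l 1 (2 * Rabs B)). pose proof (Rmax_r 1 (2 * Rabs B)).
  specialize (HM x ltac:(lra)). simpl in HM. rewrite Rminus_0_r in HM.
  assert (Hln : 0 <= ln x) by (rewrite <- ln_1; apply ln_le; lra).
  apply Rabs_def2 in HM as [HM _].
  assert (Hlnx : ln x <= e * x).
  { apply (Rmult_lt_compat_r x) in HM; [| lra].
    unfold Rdiv in HM. rewrite Rmult_assoc, Rinv_l in HM by lra. lra. }
  assert (HA : A * ln x <= Rabs A * (e * x)).
  { eapply Rle_trans; [apply Rle_abs|]. rewrite Rabs_mult, (Rabs_right (ln x)) by lra.
    apply Rmult_le_compat_l; [apply Rabs_pos | exact Hlnx]. }
  assert (HAe : Rabs A * e <= 1 / 2).
  { unfold e. apply (Rmult_le_reg_r (2 * (Rabs A + 1))); [pose proof (Rabs_pos A); lra|].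
    rewrite Rmult_assoc, Rinv_l by (pose proof (Rabs_pos A); lra). pose proof (Rabs_pos A). lra. }
  pose proof (Rle_abs B). nra.
Qed.

Lemma is_lim_seq_div_INR_sub (K m : R) : is_lim_seq (fun n => K / (INR n - m)) 0.
Proof.
  replace (Finite 0) with (Rbar_mult K (Rbar_inv p_infty)) by (simpl; f_equal; ring).
  apply is_lim_seq_scal_l, is_lim_seq_inv; [| discriminate].
  apply (is_lim_seq_plus _ _ p_infty (- m));
    [apply is_lim_seq_INR | apply is_lim_seq_const | reflexivity].
Qed.

Definition large_dimension (c0 k1 k2 rho eps D : R) : Prop :=
  let rho0 := Rpower (ln D) (- c0) in
  rho0 <= 1 /\ 1 + k2 <= rho0 * D /\ rho0 * exp (8 / (3 * k1)) <= rho / 4 /\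
  48 * (1 / (3 * k1) + ln (3 * (1 + k2) / rho0) / (4 * rho)
        + (1 + ln (3 * (1 + k2) / rho0)) / (4 * eps)) <= ln D /\
  exp (- (ln D / 2)) <= rho ^ 2 /\ 6 <= rho * (D - 2) /\ 6 <= eps * (D - 2).

Lemma large_dimension_eventually c0 k1 k2 rho eps :
  0 < c0 -> 0 < k1 -> 0 < k2 -> 0 < rho -> 0 < eps ->
  eventually (fun n : nat => large_dimension c0 k1 k2 rho eps (INR n)).
Proof.
  intros Hc0 Hk1 Hk2 Hrho Heps.
  set (K := ln (3 * (1 + k2))).
  set (A := 48 * c0 * (/ (4 * rho) + / (4 * eps))).
  set (B := 48 * (1 / (3 * k1) + K / (4 * rho) + (1 + K) / (4 * eps))).
  apply (is_lim_seq_INR (large_dimension c0 k1 k2 rho eps)).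
  generalize (filter_and _ _ (eventually_ge (2 + 6 / rho + 6 / eps))
    (is_lim_ln_p _ (filter_and _ _ (eventually_ge (Rmax 1 (- 4 * ln rho)))
      (filter_and _ _ (eventually_ln_ge ((8 / (3 * k1) - ln (rho / 4)) / c0))
        (filter_and _ _ (eventually_affine_ln_le c0 (ln (1 + k2)))
                        (eventually_affine_ln_le A B)))))).
  apply filter_imp. intros D (HD & Hl & Hll & Hmass & Hhorizon). unfold large_dimension.
  pose proof (Rmax_l 1 (- 4 * ln rho)). pose proof (Rmax_r 1 (- 4 * ln rho)).
  assert (HDpos : 0 < D) by (assert (0 < 6 / rho) by (apply Rdiv_lt_0_compat; lra);
                             assert (0 < 6 / eps) by (apply Rdiv_lt_0_compat; lra); lra).
  set (l := ln D) in *. set (ll := ln l) in *.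
  assert (Hll0 : 0 <= ll) by (unfold ll; rewrite <- ln_1; apply ln_le; lra).
  assert (Hrho0 : Rpower l (- c0) = exp (- c0 * ll)) by reflexivity.
  rewrite Hrho0.
  assert (HDexp : D = exp l) by (unfold l; rewrite exp_ln; lra).
  repeat split.
  - rewrite <- exp_0. apply exp_le_compat. nra.
  - rewrite HDexp, <- exp_plus, <- (exp_ln (1 + k2)) by lra. apply exp_le_compat. lra.
  - rewrite <- exp_plus, <- (exp_ln (rho / 4)) by lra. apply exp_le_compat.
    apply (Rmult_le_compat_l c0) in Hll; [| lra].
    replace (c0 * ((8 / (3 * k1) - ln (rho / 4)) / c0)) with (8 / (3 * k1) - ln (rho / 4)) in Hll
      by (field; lra).
    lra.
  - rewrite ln_div, ln_exp by (try apply exp_pos; lra). fold K.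
    replace (48 * (1 / (3 * k1) + (K - - c0 * ll) / (4 * rho) + (1 + (K - - c0 * ll)) / (4 * eps)))
      with (A * ll + B) by (unfold A, B; field; lra).
    exact Hhorizon.
  - replace (rho ^ 2) with (exp (2 * ln rho)) by (rewrite <- (exp_ln rho) at 2 by lra; simpl;
      rewrite Rmult_1_r, <- exp_plus; f_equal; ring).
    apply exp_le_compat. lra.
  - assert (rho * (6 / rho) = 6) by (field; lra).
    assert (0 < 6 / eps) by (apply Rdiv_lt_0_compat; lra). nra.
  - assert (eps * (6 / eps) = 6) by (field; lra).
    assert (0 < 6 / rho) by (apply Rdiv_lt_0_compat; lra). nra.
Qed.

Theorem propositionB6 :
  forall (c0 k1 k2 rho eps : R),
    0 < c0 -> 0 < k1 -> 0 < k2 ->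
    0 < rho < 1 / 12 -> 0 < eps <= 1 / 4 ->
  exists (A1 A2 B1 B2 C : R) (delta : nat -> R) (d0 : nat),
    0 < A1 /\ 0 < A2 /\ 0 < B1 /\ 0 < B2 /\ 0 < C /\
    is_lim_seq delta 0 /\
    forall (d : nat) (lam : R) (a b c : R -> R),
      (3 <= d)%nat -> (d0 <= d)%nat ->
      0 < lam -> k1 * ln (INR d) <= lam <= k2 * INR d ->
      is_solution d lam (Rpower (ln (INR d)) (- c0) / (INR d + lam)) a b c ->
      exists T1a T1 T2a T2 : R,
        first_hit (fun t => rho <= rfun d lam a b c t) 0 T1a /\
        first_hit (fun t => Derive b t <= 0) T1a T1 /\
        first_hit (fun t => 1 - eps <= rfun d lam a b c t) T1 T2a /\
        first_hit (fun t => rho <= a t) T2a T2 /\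
        (* (1) T2 - T2a = Theta(log(1/a(T2a))) = Theta(log d) *)
        A1 * ln (1 / a T2a) <= T2 - T2a <= A2 * ln (1 / a T2a) /\
        B1 * ln (INR d) <= T2 - T2a <= B2 * ln (INR d) /\
        (* (2) Align(T2) = 1 - O(lam^-2) - o(1) *)
        Rabs (Align d a b c T2 - 1) <= C / lam ^ 2 + delta d.
Proof.
  intros c0 k1 k2 rho eps Hc0 Hk1 Hk2 Hrho Heps.
  destruct (large_dimension_eventually c0 k1 k2 rho eps Hc0 Hk1 Hk2 (proj1 Hrho) (proj1 Heps))
    as [d0 Hlarge].
  set (C := 9 / (8 * rho ^ 2)).
  exists (1 / 48), (1 / 10), (1 / 96), (1 / 5), C, (fun n => C / (INR n - 2)), d0.
  do 4 (split; [lra|]).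
  split; [unfold C; apply Rdiv_lt_0_compat; nra|].
  split; [apply is_lim_seq_div_INR_sub|].
  intros d lam a b c Hd Hdd0 Hlam [Hlam_lo Hlam_hi] Hsol.
  destruct (Hlarge d Hdd0) as (Hrho0 & Hmass & Hstart & Hhorizon & Hsmall & Hdim_rho & Hdim_eps).
  set (rho0 := Rpower (ln (INR d)) (- c0)) in *.
  assert (HD : 0 < INR d) by (apply lt_0_INR; lia).
  assert (Hmu : 0 < rho0 / (INR d + lam)) by (apply Rdiv_lt_0_compat; [apply exp_pos | lra]).
  assert (Hrho0_eq : rho0 / (INR d + lam) * (INR d + lam) = rho0) by (field; lra).
  apply (solution_phases d lam (rho0 / (INR d + lam)) a b c Hsol Hd Hlam Hmu) with k1 k2;
    rewrite ?Hrho0_eq; assumption.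
Qed.
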